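(* Let $P,Q$ be distributions over pairs $x=(x_1,x_2)$ with $x_1\in\{1,\dots,r_1\}$ and $x_2\in\{1,\dots,r_2\}$, and assume $P(x_i=t)>0$ for all $i\in\{1,2\}$, $t\in\{1,\dots,r_i\}$. Let $\mathcal{F}=\{f_1(x_1)+f_2(x_2)\}$ where $f_i:\{1,\dots,r_i\}\to\mathbb{R}$ are arbitrary functions. Then $$\tau(P,Q,\mathcal{F})\le \frac{2}{\lambda_2(\bar K_P)}\max_{i\in\{1,2\},\,t\in\{1,\dots,r_i\}}\frac{Q(x_i=t)}{P(x_i=t)}$$ (interpreted as $+\infty$ if $\lambda_2(\bar K_P)=0$).
   Context: $\tau(P,Q,\mathcal{F})=\sup_{f,g\in\mathcal{F}}\mathbb{E}_Q[(f(x)-g(x))^2]/\mathbb{E}_P[(f(x)-g(x))^2]$ with the convention $0/0=0$. Identify $P$ with the $r_1\times r_2$ matrix $[P]_{a,b}=P(x_1=a,x_2=b)$; let $D_1=\mathrm{diag}(P(x_1=1),\dots,P(x_1=r_1))$ and $D_2=\mathrm{diag}(P(x_2=1),\dots,P(x_2=r_2))$ (row and column sums of $P$). The signless Laplacian of $P$ is the $(r_1+r_2)\times(r_1+r_2)$ matrix $$K_P=\begin{pmatrix}D_1 & P\\ P^\top & D_2\end{pmatrix},$$ and the normalized signless Laplacian is $\bar K_P=\mathrm{diag}(K_P)^{-1/2}K_P\,\mathrm{diag}(K_P)^{-1/2}$, where $\mathrm{diag}(K_P)$ is $K_P$ with all off-diagonal entries set to zero. For a symmetric matrix $M$, $\lambda_1(M)\le\lambda_2(M)\le\cdots$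 are its eigenvalues in ascending order. *)

From HB Require Import structures.
From mathcomp Require Import all_boot all_order all_algebra.
From mathcomp Require Import all_classical all_reals.
From mathcomp Require Import ereal.
Set Implicit Arguments. Unset Strict Implicit. Unset Printing Implicit Defensive.
Import Order.TTheory GRing.Theory Num.Theory.
Local Open Scope ring_scope.

Section Defs.
Variables (R : realType) (r1 r2 : nat).

(* a distribution on {1..r1} x {1..r2} (0-indexed as 'I_r1 * 'I_r2) *)
Definition is_distr (P : {ffun 'I_r1 * 'I_r2 -> R}) : Prop :=
  (forall x, 0 <= P x) /\ \sum_x P x = 1.

Definition marg1 (P : {ffun 'I_r1 * 'I_r2 -> R}) (a : 'I_r1) : R :=
  \sum_(b < r2) P (a, b).
Definition marg2 (P : {ffun 'I_r1 * 'I_r2 -> R}) (b : 'I_r2) : R :=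
  \sum_(a < r1) P (a, b).

Definition expect (P : {ffun 'I_r1 * 'I_r2 -> R}) (h : 'I_r1 * 'I_r2 -> R) : R :=
  \sum_x P x * h x.

Definition addfun (f1 : 'I_r1 -> R) (f2 : 'I_r2 -> R) (x : 'I_r1 * 'I_r2) : R :=
  f1 x.1 + f2 x.2.

(* ratio E_Q[(f-g)^2] / E_P[(f-g)^2] in extended reals, with 0/0 = 0 and c/0 = +oo *)
Definition eratio (num den : R) : \bar R :=
  if den == 0 then (if num == 0 then 0%E else +oo%E) else (num / den)%:E.

Definition tau (P Q : {ffun 'I_r1 * 'I_r2 -> R}) : \bar R :=
  ereal_sup [set r | exists (f1 g1 : 'I_r1 -> R) (f2 g2 : 'I_r2 -> R),
      r = eratio
        (expect Q (fun x => (addfun f1 f2 x - addfun g1 g2 x) ^+ 2))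
        (expect P (fun x => (addfun f1 f2 x - addfun g1 g2 x) ^+ 2))]%classic.

Definition Pmx (P : {ffun 'I_r1 * 'I_r2 -> R}) : 'M[R]_(r1, r2) :=
  \matrix_(a, b) P (a, b).

Definition signlessLap (P : {ffun 'I_r1 * 'I_r2 -> R}) : 'M[R]_(r1 + r2) :=
  block_mx (diag_mx (\row_a marg1 P a)) (Pmx P)
           (Pmx P)^T (diag_mx (\row_b marg2 P b)).

Definition normSignlessLap (P : {ffun 'I_r1 * 'I_r2 -> R}) : 'M[R]_(r1 + r2) :=
  let K := signlessLap P in
  let Dm := diag_mx (\row_i (Num.sqrt (K i i))^-1) in
  Dm *m K *m Dm.

End Defs.

Definition eigenvalues_asc (R : realType) (n : nat) (M : 'M[R]_n) (s : seq R) : Prop :=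
  sorted <=%R s /\ char_poly M = \prod_(a <- s) ('X - a%:P).

From HB Require Import structures.
From mathcomp Require Import all_boot all_order all_algebra.
From mathcomp Require Import all_classical all_reals.
From mathcomp Require Import ereal.
From mathcomp Require Import spectral sesquilinear.
From mathcomp.real_closed Require Import complex.
From mathcomp.algebra_tactics Require Import ring.
Set Implicit Arguments. Unset Strict Implicit. Unset Printing Implicit Defensive.
Import Order.TTheory GRing.Theory Num.Theory.
Local Open Scope ring_scope.

(* Every difference of two functions of F is additive, k1(x1) + k2(x2), and moving a
   constant from k2 to k1 makes E_P[k1] = E_P[k2].  For v = (sqrt(p1) k1, sqrt(p2) k2),
   E_P[(k1 + k2)^2] is the quadratic form of the normalized signless Laplacian at v and
   |v|^2 = E_P[k1^2] + E_P[k2^2].  The centering says that v is orthogonal to the null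
   vector (sqrt(p1), -sqrt(p2)); since at most one eigenvalue lies below lambda_2, the
   Rayleigh quotient of v is at least lambda_2.  On the other hand
   E_Q[(k1 + k2)^2] <= 2 (E_Q[k1^2] + E_Q[k2^2]) <= 2 M |v|^2.
   The spectral theorem is used for the complexified matrix, which is Hermitian. *)

Section Spectral.
Local Open Scope sesquilinear_scope.

Lemma trmxC_mul (C : numClosedFieldType) m n p (A : 'M[C]_(m, n)) (B : 'M[C]_(n, p)) :
  (A *m B)^t* = B^t* *m A^t*.
Proof. by rewrite trmx_mul map_mxM. Qed.

Lemma char_poly_similar (F : comNzRingType) n (A Q Qi : 'M[F]_n) :
  Qi *m Q = 1%:M -> char_poly (Qi *m A *m Q) = char_poly A.
Proof.
move=> QiQ; rewrite /char_poly /char_poly_mx.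
have QiQ' : map_mx (@polyC F) Qi *m map_mx (@polyC F) Q = 1%:M.
  by rewrite -map_mxM QiQ map_mx1.
have -> : 'X%:M - map_mx (@polyC F) (Qi *m A *m Q) =
    map_mx (@polyC F) Qi *m ('X%:M - map_mx (@polyC F) A) *m map_mx (@polyC F) Q.
  by rewrite mulmxBr mulmxBl !map_mxM mul_mx_scalar -scalemxAl QiQ' scalemx1.
by rewrite !det_mulmx mulrAC -det_mulmx QiQ' det1 mul1r.
Qed.

Lemma hermitian_char_poly (C : numClosedFieldType) n (A : 'M[C]_n) :
  A \is hermsymmx -> char_poly A = \prod_(i < n) ('X - (spectral_diag A 0 i)%:P).
Proof.
move=> HA; set P := spectralmx A.
have PU : P \is unitarymx := spectral_unitarymx A.
have PtP : P^t* *m P = 1%:M by rewrite -invmx_unitary // mulVmx ?unitarymx_unit.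
have /orthomx_spectralP AE := hermitian_normalmx HA.
rewrite {1}AE invmx_unitary // char_poly_similar // char_poly_trig ?diag_mx_is_trig //.
by apply: eq_bigr => i _; rewrite mxE eqxx mulr1n.
Qed.

(* If at most one [d i] lies below [lam > 0], a null vector [z] of [diag d] has a
   single nonzero coordinate, at an index where [d i] may be small; orthogonality
   to [z] kills that coordinate of [w]. *)
Lemma diag_quadform_lbound (C : numClosedFieldType) n (d z w : 'rV[C]_n) (lam : C) :
  d \is a realmx -> lam \is Num.real -> 0 < lam ->
  (forall i j : 'I_n, i != j -> d 0 i < lam -> d 0 j < lam -> False) ->
  z *m diag_mx d = 0 -> z != 0 -> w *m z^t* = 0 ->
  lam * (w *m w^t*) 0 0 <= (w *m diag_mx d *m w^t*) 0 0.
Proof.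
move=> dR lamR lam0 atmost1 zd z0 wz.
have zdi i : z 0 i * d 0 i = 0.
  by move/matrixP: zd => /(_ 0 i); rewrite mul_mx_diag !mxE.
have wi_eq0 i : d 0 i < lam -> w 0 i = 0.
  move=> dil.
  have zk k : k != i -> z 0 k = 0.
    move=> ki; have /eqP := zdi k; rewrite mulf_eq0 => /orP[/eqP //|/eqP dk0].
    by case: (atmost1 k i ki _ dil); rewrite dk0.
  have zi0 : z 0 i != 0.
    apply: contraNneq z0 => zi0; apply/eqP/rowP => k; rewrite mxE.
    by have [->|ki] := eqVneq k i; [exact: zi0|exact: zk].
  move/matrixP: wz => /(_ 0 0); rewrite !mxE (bigD1 i) //= big1 ?addr0.
    by rewrite !mxE => /eqP; rewrite mulf_eq0 conjC_eq0 (negPf zi0) orbF => /eqP.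
  by move=> k ki; rewrite !mxE zk ?conjC0 ?mulr0.
rewrite mul_mx_diag !mxE mulr_sumr; apply: ler_sum => i _; rewrite !mxE.
rewrite mulrAC [X in _ <= X]mulrC.
have [ld|dl] := real_leP lamR (mxOverP dR 0 i).
  by rewrite ler_wpM2r // mul_conjC_ge0.
by rewrite wi_eq0 // mul0r !mulr0.
Qed.

Lemma hermitian_quadform_lbound (C : numClosedFieldType) n (A : 'M[C]_n) (lam : C)
    (u v : 'rV[C]_n) :
  A \is hermsymmx -> lam \is Num.real -> 0 < lam ->
  (forall i j : 'I_n, i != j ->
     spectral_diag A 0 i < lam -> spectral_diag A 0 j < lam -> False) ->
  u *m A = 0 -> u != 0 -> v *m u^t* = 0 ->
  lam * (v *m v^t*) 0 0 <= (v *m A *m v^t*) 0 0.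
Proof.
move=> HA lamR lam0 atmost1 uA u0 vu.
set P := spectralmx A.
have PU : P \is unitarymx := spectral_unitarymx A.
have PPt : P *m P^t* = 1%:M by apply/unitarymxP.
have PtP : P^t* *m P = 1%:M by rewrite -invmx_unitary // mulVmx ?unitarymx_unit.
have /orthomx_spectralP := hermitian_normalmx HA.
rewrite invmx_unitary // -/P => AE.
have conjP (x : 'rV[C]_n) : x *m P^t* *m (x *m P^t*)^t* = x *m x^t*.
  by rewrite trmxC_mul trmxCK mulmxA -(mulmxA x) PtP mulmx1.
rewrite -conjP.
have -> : v *m A *m v^t* = v *m P^t* *m diag_mx (spectral_diag A) *m (v *m P^t*)^t*.
  by rewrite {1}AE trmxC_mul trmxCK !mulmxA.
apply: (diag_quadform_lbound (z := u *m P^t*)) => //.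
- exact: hermitian_spectral_diag_real.
- have AP : A *m P^t* = P^t* *m diag_mx (spectral_diag A).
    by rewrite {1}AE -!mulmxA PPt mulmx1.
  by rewrite -mulmxA -AP mulmxA uA mul0mx.
- apply: contraNneq u0 => /(congr1 (mulmx^~ P)).
  by rewrite -mulmxA PtP mulmx1 mul0mx => ->.
- by rewrite trmxC_mul trmxCK mulmxA -(mulmxA v) PtP mulmx1.
Qed.

End Spectral.

Lemma count_lt_nth1 (R : realDomainType) (s : seq R) :
  sorted <=%R s -> (count (fun x : R => (x < s`_1)%R) s <= 1)%N.
Proof.
case: s => [//|a [|b t]]; first by rewrite /=; case: (_ < _).
move=> /= /andP[_ pt].
have bt : count (fun x => x < b) t = 0%N.
  apply/eqP; rewrite -leqn0 leqNgt -has_count; apply/hasPn => x.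
  by move=> /(allP (order_path_min le_trans pt)) bx; rewrite ltNge bx.
by rewrite bt ltxx; case: (a < b).
Qed.

Section RealSymmetric.
Local Open Scope sesquilinear_scope.
Variables (R : rcfType) (n : nat) (A : 'M[R]_n) (s : seq R).
Hypotheses (A_sym : A^T = A) (s_sorted : sorted <=%R s)
  (A_char : char_poly A = \prod_(a <- s) ('X - a%:P)).

Local Notation Ac := (map_mx (real_complex R) A).

Lemma trmxC_real m p (B : 'M[R]_(m, p)) :
  (map_mx (real_complex R) B)^t* = map_mx (real_complex R) B^T.
Proof.
apply/matrixP => i j; rewrite !mxE conj_Creal //.
by apply/complex_realP; exists (B j i).
Qed.

Lemma hermitian_complexified : Ac \is hermsymmx.
Proof.
by apply/is_hermitianmxP; rewrite expr0 scale1r trmxC_real A_sym.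
Qed.

Lemma spectral_diag_perm_eq :
  perm_eq [seq spectral_diag Ac 0 k | k <- enum 'I_n] (map (real_complex R) s).
Proof.
apply: prod_XsubC_eq; rewrite big_map big_enum /=.
under eq_bigl do rewrite inE.
rewrite -hermitian_char_poly ?hermitian_complexified // -map_char_poly A_char.
rewrite rmorph_prod big_map; apply: eq_bigr => a _; exact: map_polyXsubC.
Qed.

Lemma spectral_diag_lt_nth1 (i j : 'I_n) : i != j ->
  spectral_diag Ac 0 i < real_complex R s`_1 ->
  spectral_diag Ac 0 j < real_complex R s`_1 -> False.
Proof.
move=> ij di dj.
have ji : j \in rem i (enum 'I_n).
  by rewrite mem_rem_uniq ?enum_uniq // inE eq_sym ij mem_enum.
have := count_lt_nth1 s_sorted.
move/permP: spectral_diag_perm_eq => /(_ (fun x => x < real_complex R s`_1)).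
rewrite count_map (permP (perm_to_rem (mem_enum _ i))) /= di count_map.
under [in RHS]eq_count do rewrite /= ltcR.
move=> <-; rewrite add1n ltnS leqn0 -[_ == 0%N]negbK -lt0n -has_count.
by move=> /hasPn/(_ j ji); rewrite /= dj.
Qed.

Lemma sym_quadform_lbound (u v : 'rV[R]_n) :
  0 < s`_1 -> u *m A = 0 -> u != 0 -> v *m u^T = 0 ->
  s`_1 * (v *m v^T) 0 0 <= (v *m A *m v^T) 0 0.
Proof.
move=> s1_gt0 uA u0 vu.
have lamR : real_complex R s`_1 \is Num.real by apply/complex_realP; exists s`_1.
have := hermitian_quadform_lbound hermitian_complexified lamR _ spectral_diag_lt_nth1.
move=> /(_ (map_mx (real_complex R) u) (map_mx (real_complex R) v)).
rewrite !trmxC_real -!map_mxM uA vu !map_mx0 map_mx_eq0 ltcR.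
move=> /(_ s1_gt0 erefl u0 erefl).
by rewrite !mxE -rmorphM lecR.
Qed.

End RealSymmetric.

Section Marginals.
Variables (R : realType) (r1 r2 : nat) (P : {ffun 'I_r1 * 'I_r2 -> R}).

Lemma sum_pair (g : 'I_r1 -> 'I_r2 -> R) :
  \sum_x P x * g x.1 x.2 = \sum_a \sum_b P (a, b) * g a b.
Proof. by rewrite pair_bigA; apply: eq_bigr => -[]. Qed.

Lemma expect_marg1 (g : 'I_r1 -> R) : \sum_x P x * g x.1 = \sum_a marg1 P a * g a.
Proof.
rewrite (sum_pair (fun a _ => g a)); apply: eq_bigr => a _.
by rewrite /marg1 mulr_suml.
Qed.

Lemma expect_marg2 (g : 'I_r2 -> R) : \sum_x P x * g x.2 = \sum_b marg2 P b * g b.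
Proof.
rewrite (sum_pair (fun _ b => g b)) exchange_big; apply: eq_bigr => b _.
by rewrite /marg2 mulr_suml.
Qed.

Lemma sum_marg1 : \sum_a marg1 P a = \sum_x P x.
Proof. by rewrite /marg1 pair_bigA; apply: eq_bigr => -[]. Qed.

Lemma sum_marg2 : \sum_b marg2 P b = \sum_x P x.
Proof. by rewrite /marg2 exchange_big pair_bigA; apply: eq_bigr => -[]. Qed.

End Marginals.

Lemma row_mx_dot (R : pzRingType) n1 n2 (x1 y1 : 'rV[R]_n1) (x2 y2 : 'rV[R]_n2) :
  (row_mx x1 x2 *m (row_mx y1 y2)^T) 0 0 =
  \sum_i x1 0 i * y1 0 i + \sum_j x2 0 j * y2 0 j.
Proof.
rewrite tr_row_mx mul_row_col !mxE.
by congr (_ + _); apply: eq_bigr => i _; rewrite mxE.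
Qed.

Section SignlessLaplacian.
Variables (R : realType) (r1 r2 : nat) (P : {ffun 'I_r1 * 'I_r2 -> R}).

Definition pairvec (k1 : 'I_r1 -> R) (k2 : 'I_r2 -> R) : 'rV[R]_(r1 + r2) :=
  row_mx (\row_a k1 a) (\row_b k2 b).

Definition margvec (k1 : 'I_r1 -> R) (k2 : 'I_r2 -> R) : 'rV[R]_(r1 + r2) :=
  pairvec (fun a => Num.sqrt (marg1 P a) * k1 a) (fun b => Num.sqrt (marg2 P b) * k2 b).

Lemma signlessLap_sym : (signlessLap P)^T = signlessLap P.
Proof. by rewrite /signlessLap tr_block_mx trmxK !tr_diag_mx. Qed.

Lemma normSignlessLap_sym : (normSignlessLap P)^T = normSignlessLap P.
Proof. by rewrite /normSignlessLap !trmx_mul !tr_diag_mx signlessLap_sym mulmxA. Qed.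

Lemma signlessLap_null : pairvec (fun=> 1) (fun=> -1) *m signlessLap P = 0.
Proof.
rewrite /pairvec /signlessLap mul_row_block; apply/rowP => i.
have [a ->|b ->] := split_ordP i.
  rewrite row_mxEl mul_mx_diag !mxE mul1r.
  under eq_bigr do rewrite !mxE mulN1r.
  by rewrite sumrN /marg1 subrr.
rewrite row_mxEr mul_mx_diag !mxE mulN1r.
under eq_bigr do rewrite !mxE mul1r.
by rewrite /marg2 subrr.
Qed.

Lemma signlessLap_quadform (k1 : 'I_r1 -> R) (k2 : 'I_r2 -> R) :
  (pairvec k1 k2 *m signlessLap P *m (pairvec k1 k2)^T) 0 0 =
  \sum_x P x * (k1 x.1 + k2 x.2) ^+ 2.
Proof.
rewrite /pairvec /signlessLap mul_row_block row_mx_dot.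
have e1 : \row_a k1 a *m diag_mx (\row_a marg1 P a) + \row_b k2 b *m (Pmx P)^T
    = \row_a (\sum_b (k1 a + k2 b) * P (a, b)).
  apply/rowP => a; rewrite mul_mx_diag !mxE /marg1 mulr_sumr -big_split /=.
  by apply: eq_bigr => b _; rewrite !mxE mulrDl mulrC.
have e2 : \row_a k1 a *m Pmx P + \row_b k2 b *m diag_mx (\row_b marg2 P b)
    = \row_b (\sum_a (k1 a + k2 b) * P (a, b)).
  apply/rowP => b; rewrite mul_mx_diag !mxE /marg2 mulr_sumr -big_split /=.
  by apply: eq_bigr => a _; rewrite !mxE mulrDl [k2 b * _]mulrC.
rewrite e1 e2 (sum_pair P (fun a b => (k1 a + k2 b) ^+ 2)).
under eq_bigr do rewrite !mxE mulr_suml.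
under [X in _ + X]eq_bigr do rewrite !mxE mulr_suml.
rewrite [X in _ + X]exchange_big -big_split /=.
by apply: eq_bigr => a _; rewrite -big_split /=; apply: eq_bigr => b _; ring.
Qed.

Section PositiveMarginals.
Hypotheses (marg1_gt0 : forall a, 0 < marg1 P a) (marg2_gt0 : forall b, 0 < marg2 P b).

Lemma margvec_scale k1 k2 :
  margvec k1 k2 *m diag_mx (\row_i (Num.sqrt (signlessLap P i i))^-1) = pairvec k1 k2.
Proof.
have sqK (x y : R) : 0 < x -> Num.sqrt x * y * (Num.sqrt x)^-1 = y.
  by move=> x0; rewrite mulrAC mulfV ?mul1r // gt_eqF // sqrtr_gt0.
apply/rowP => i; rewrite mul_mx_diag mxE [X in _ * X]mxE /margvec /pairvec /signlessLap.
have [a ->|b ->] := split_ordP i.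
  by rewrite block_mxEul !row_mxEl !mxE eqxx mulr1n sqK.
by rewrite block_mxEdr !row_mxEr !mxE eqxx mulr1n sqK.
Qed.

Lemma margvec_dot k1 k2 l1 l2 :
  (margvec k1 k2 *m (margvec l1 l2)^T) 0 0 =
  \sum_a marg1 P a * (k1 a * l1 a) + \sum_b marg2 P b * (k2 b * l2 b).
Proof.
have sqrtK (x : R) y z : 0 < x -> Num.sqrt x * y * (Num.sqrt x * z) = x * (y * z).
  by move=> x0; rewrite mulrACA -expr2 sqr_sqrtr ?ltW.
rewrite row_mx_dot.
by congr (_ + _); apply: eq_bigr => i _; rewrite !mxE sqrtK.
Qed.

Lemma normSignlessLap_quadform k1 k2 :
  (margvec k1 k2 *m normSignlessLap P *m (margvec k1 k2)^T) 0 0 =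
  \sum_x P x * (k1 x.1 + k2 x.2) ^+ 2.
Proof.
rewrite /normSignlessLap !mulmxA margvec_scale -mulmxA -[diag_mx _]tr_diag_mx.
by rewrite -trmx_mul margvec_scale signlessLap_quadform.
Qed.

Lemma normSignlessLap_null : margvec (fun=> 1) (fun=> -1) *m normSignlessLap P = 0.
Proof. by rewrite /normSignlessLap !mulmxA margvec_scale signlessLap_null !mul0mx. Qed.

End PositiveMarginals.
End SignlessLaplacian.

Lemma normSignlessLap_poincare (R : realType) r1 r2 (P : {ffun 'I_r1 * 'I_r2 -> R})
    (s : seq R) (k1 : 'I_r1 -> R) (k2 : 'I_r2 -> R) :
  \sum_x P x = 1 -> (forall a, 0 < marg1 P a) -> (forall b, 0 < marg2 P b) ->
  eigenvalues_asc (normSignlessLap P) s -> 0 < s`_1 ->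
  \sum_a marg1 P a * k1 a = \sum_b marg2 P b * k2 b ->
  s`_1 * (\sum_a marg1 P a * k1 a ^+ 2 + \sum_b marg2 P b * k2 b ^+ 2)
    <= \sum_x P x * (k1 x.1 + k2 x.2) ^+ 2.
Proof.
move=> P1 marg1_gt0 marg2_gt0 [s_sorted A_char] s1_gt0 centered.
set u := margvec P (fun=> 1) (fun=> -1).
have u_ne0 : u != 0.
  apply/eqP => u0.
  have := margvec_dot marg1_gt0 marg2_gt0 (fun=> 1) (fun=> -1) (fun=> 1) (fun=> -1).
  rewrite -/u u0 mul0mx mxE.
  under eq_bigr do rewrite !mulr1.
  under [X in _ + X]eq_bigr do rewrite mulrNN !mulr1.
  by rewrite sum_marg1 sum_marg2 P1 => /eqP; rewrite eq_sym -[1 + 1]/(2%:R) pnatr_eq0.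
have vu : margvec P k1 k2 *m u^T = 0.
  apply/rowP => i; rewrite ord1 [RHS]mxE margvec_dot //.
  under eq_bigr do rewrite mulr1.
  under [X in _ + X]eq_bigr do rewrite mulrN1 mulrN.
  by rewrite sumrN centered subrr.
have := sym_quadform_lbound (normSignlessLap_sym P) s_sorted A_char s1_gt0
  (normSignlessLap_null marg1_gt0 marg2_gt0) u_ne0 vu.
by rewrite normSignlessLap_quadform // margvec_dot.
Qed.

Lemma additive_centered (R : realType) r1 r2 (P : {ffun 'I_r1 * 'I_r2 -> R})
    (h1 : 'I_r1 -> R) (h2 : 'I_r2 -> R) :
  \sum_x P x = 1 ->
  exists k1 k2, (forall x, h1 x.1 + h2 x.2 = k1 x.1 + k2 x.2) /\
    \sum_a marg1 P a * k1 a = \sum_b marg2 P b * k2 b.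
Proof.
move=> P1; pose c := (\sum_b marg2 P b * h2 b - \sum_a marg1 P a * h1 a) / 2.
exists (fun a => h1 a + c), (fun b => h2 b - c); split=> [x|]; first by ring.
under eq_bigr do rewrite mulrDr.
under [X in _ = X]eq_bigr do rewrite mulrBr.
rewrite big_split sumrB /= -!mulr_suml sum_marg1 sum_marg2 P1 /c.
by field.
Qed.

Lemma le_mul_bigmax_ratio (R : realFieldType) (I : finType) (f g : I -> R) (i : I) :
  0 < g i -> f i <= \big[Num.max/0]_j (f j / g j) * g i.
Proof.
by move=> gi_gt0; rewrite -ler_pdivrMr //; exact: (le_bigmax 0 (fun j => f j / g j)).
Qed.

Lemma eratio_le_div (R : realType) (c lam num den E : R) :
  0 < lam -> 0 <= c -> 0 <= E -> 0 <= num -> num <= c * E -> lam * E <= den ->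
  (eratio num den <= (c / lam)%:E)%E.
Proof.
move=> lam_gt0 c_ge0 E_ge0 num_ge0 num_le den_ge.
rewrite /eratio; case: eqP => [den0|/eqP den_ne0].
  have E0 : E = 0.
    by apply/eqP; rewrite eq_le E_ge0 andbT -(pmulr_rle0 _ lam_gt0) -den0.
  have -> : num = 0 by apply/eqP; rewrite eq_le num_ge0 andbT -(mulr0 c) -E0.
  by rewrite eqxx lee_fin divr_ge0 // ltW.
have den_gt0 : 0 < den.
  by rewrite lt_neqAle eq_sym den_ne0 (le_trans _ den_ge) // mulr_ge0 // ltW.
rewrite lee_fin ler_pdivrMr // (le_trans num_le) //.
have -> : c * E = c / lam * (lam * E) by field; rewrite gt_eqF.
by rewrite ler_wpM2l // divr_ge0 // ltW.
Qed.

Lemma expect_sqr_additive_le (R : realType) r1 r2 (P Q : {ffun 'I_r1 * 'I_r2 -> R})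
    (M : R) (k1 : 'I_r1 -> R) (k2 : 'I_r2 -> R) :
  (forall x, 0 <= Q x) ->
  (forall a, marg1 Q a <= M * marg1 P a) -> (forall b, marg2 Q b <= M * marg2 P b) ->
  \sum_x Q x * (k1 x.1 + k2 x.2) ^+ 2
    <= 2 * M * (\sum_a marg1 P a * k1 a ^+ 2 + \sum_b marg2 P b * k2 b ^+ 2).
Proof.
move=> Q_ge0 MQ1 MQ2.
have weight_le (q p k : R) : q <= M * p -> q * (2 * k ^+ 2) <= 2 * M * (p * k ^+ 2).
  move=> qp; rewrite mulrC (_ : 2 * M * _ = 2 * k ^+ 2 * (M * p)); last by ring.
  by apply: ler_wpM2l => //; rewrite mulr_ge0 ?sqr_ge0.
have sqrD_le (x y : R) : (x + y) ^+ 2 <= 2 * x ^+ 2 + 2 * y ^+ 2.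
  by rewrite -subr_ge0 -[X in _ <= X](_ : (x - y) ^+ 2 = _) ?sqr_ge0 //; ring.
apply: (@le_trans _ _ (\sum_x Q x * (2 * k1 x.1 ^+ 2 + 2 * k2 x.2 ^+ 2))).
  by apply: ler_sum => x _; rewrite ler_wpM2l.
under eq_bigr do rewrite mulrDr.
rewrite big_split /= (expect_marg1 Q (fun a => 2 * k1 a ^+ 2)).
rewrite (expect_marg2 Q (fun b => 2 * k2 b ^+ 2)) mulrDr !mulr_sumr.
by apply: lerD; apply: ler_sum => i _; apply: weight_le.
Qed.

Theorem mainTheorem2 (R : realType) (r1 r2 : nat)
    (P Q : {ffun 'I_r1 * 'I_r2 -> R}) (s : seq R) :
  is_distr P -> is_distr Q ->
  (forall a : 'I_r1, 0 < marg1 P a) ->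
  (forall b : 'I_r2, 0 < marg2 P b) ->
  eigenvalues_asc (normSignlessLap P) s ->
  let lambda2 := s`_1 in
  let M := Num.max (\big[Num.max/0]_(a < r1) (marg1 Q a / marg1 P a))
                   (\big[Num.max/0]_(b < r2) (marg2 Q b / marg2 P b)) in
  (tau P Q <= (if (0 < lambda2)%R then (2 / lambda2 * M)%:E else +oo))%E.
Proof.
move=> [_ P1] [Q_ge0 _] marg1_gt0 marg2_gt0 eig; cbv zeta.
set M := Num.max _ _.
case: ifPn => [s1_gt0|_]; last by rewrite leey.
have MQ1 a : marg1 Q a <= M * marg1 P a.
  apply: le_trans (le_mul_bigmax_ratio _ (marg1_gt0 a)) _.
  by apply: ler_wpM2r; [exact/ltW | rewrite /M le_max lexx].
have MQ2 b : marg2 Q b <= M * marg2 P b.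
  apply: le_trans (le_mul_bigmax_ratio _ (marg2_gt0 b)) _.
  by apply: ler_wpM2r; [exact/ltW | rewrite /M le_max lexx orbT].
apply: ge_ereal_sup => _ [f1 [g1 [f2 [g2 ->]]]].
have [k1 [k2 [k_eq centered]]] :=
  additive_centered (fun a => f1 a - g1 a) (fun b => f2 b - g2 b) P1.
have diff_eq x : addfun f1 f2 x - addfun g1 g2 x = k1 x.1 + k2 x.2.
  by rewrite -k_eq /addfun addrACA opprD.
rewrite /expect; under eq_bigr do rewrite diff_eq.
under [X in eratio _ X]eq_bigr do rewrite diff_eq.
rewrite mulrAC; apply: eratio_le_div s1_gt0 _ _ _
  (expect_sqr_additive_le k1 k2 Q_ge0 MQ1 MQ2) (normSignlessLap_poincare P1 marg1_gt0 marg2_gt0 eig s1_gt0 centered).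
- by rewrite mulr_ge0 // /M le_max bigmax_ge_id.
- by rewrite addr_ge0 // sumr_ge0 // => i _; rewrite mulr_ge0 ?sqr_ge0 // ltW.
- by rewrite sumr_ge0 // => x _; rewrite mulr_ge0 ?sqr_ge0.
Qed.
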